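(* Let $\Bbbk$ be a field, $R=\Bbbk[x_1,\dots,x_m]$ with the standard $\mathbb Z^m$-grading, and let $I\subseteq R$ be a monomial ideal with minimal monomial generating set $S=\{s_1,\dots,s_n\}$. Suppose that $R/I$ is of generic type. Then the algebraic Scarf complex $F_{\Delta}$ of $I$ is a minimal free multigraded resolution of $R/I$.
   Context: For $A\subseteq S$ let $m_A$ denote the least common multiple of the monomials in $A$ (with $m_\emptyset=1$), and identify monomials with their exponent vectors in $\mathbb Z^m$. The LCM-lattice $\Lambda$ is the set $\{m_A : \emptyset\ne A\subseteq S\}$. An element $\alpha\in\Lambda$ is called generic if the set $\{A\subseteq S : m_A=\alpha\}$ is a closed interval in the Boolean lattice of subsets of $S$, i.e. there are sets $I_\alpha\subseteq I^\alpha$ with $\{A : m_A=\alpha\}=\{A : I_\alpha\subseteq A\subseteq I^\alpha\}$. $R/I$ is of generic type if every element of $\Lambda$ is generic. The Scarf complex is $\Delta=\{A\subseteq S : m_B\neq m_A \text{ for all } B\subseteq S,\ B\ne A\}$ (a simplicial complex). Fix a total order on $S$. The algebraic Scarf complex $F_\Delta$ is the complex of free multigraded $R$-modules whose homological degree $i$ term has basis $\{e_A : A\in\Delta, |A|=i\}$ with $e_A$ of multidegree $m_A$, and differential $\partial(e_A)=\sum_{s\in A}\operatorname{sign}(s,A)\,\frac{m_A}{m_{A\setminus\{s\}}}\,e_{A\setminus\{s\}}$, where $\operatorname{sign}(s,A)=(-1)^{j+1}$ if $s$ is the $j$-th element of $A$; it is augmented to $R/I$ via $e_\emptyset\mapsto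 1$. *)

From HB Require Import structures.
From mathcomp Require Import all_boot all_order all_algebra.
From mathcomp Require Import mpoly.
Set Implicit Arguments. Unset Strict Implicit. Unset Printing Implicit Defensive.
Import Order.TTheory GRing.Theory.
Local Open Scope ring_scope.

Section Scarf.
Variables (k : fieldType) (m n : nat).
(* The minimal generators s_1,...,s_n, given by their exponent vectors;
   the total order on S is the order of the indices 'I_n. *)
Variable s : 'I_n -> 'X_{1..m}.

Local Notation R := {mpoly k[m]}.

(* m_A : lcm of the monomials in A (componentwise max; m_emptyset = 1). *)
Definition lcmS (A : {set 'I_n}) : 'X_{1..m} :=
  [multinom (\max_(i in A) s i j)%N | j < m].

Definition mdiv (a b : 'X_{1..m}) : bool := [forall j, (a j <= b j)%N].

Definition minimal_gens : Prop := forall i j : 'I_n, i != j -> ~~ mdiv (s i) (s j).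

Definition in_ideal (p : R) : Prop :=
  exists q : 'I_n -> R, p = \sum_(i < n) q i * 'X_[s i].

Definition generic_type : Prop :=
  forall A0 : {set 'I_n}, A0 != set0 ->
    exists Il Iu : {set 'I_n}, Il \subset Iu /\
      forall A : {set 'I_n}, lcmS A = lcmS A0 <-> (Il \subset A /\ A \subset Iu).

Definition scarf : pred {set 'I_n} :=
  fun A => [forall B : {set 'I_n}, (B != A) ==> (lcmS B != lcmS A)].

(* sign(t, A) = (-1)^(j+1) where t is the j-th element of A *)
Definition sgn (t : 'I_n) (A : {set 'I_n}) : R :=
  (-1) ^+ #|[set u in A | (u < t)%N]|.

(* the monomial m_A / m_B (for m_B | m_A) *)
Definition mquot (a b : 'X_{1..m}) : 'X_{1..m} := [multinom (a j - b j)%N | j < m].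

(* An element of the free module F_i = \bigoplus_{A in Delta, |A| = i} R e_A
   is represented by its coefficient function c (c A = coefficient of e_A). *)
Definition chain (i : nat) (c : {set 'I_n} -> R) : Prop :=
  forall A, c A != 0 -> scarf A /\ #|A| = i.

(* The differential: coefficient of e_B in d(sum_A c A e_A), i.e.
   sum over A = B + {t} in Delta of sign(t,A) * (m_A/m_B) * c A. *)
Definition bd (c : {set 'I_n} -> R) (B : {set 'I_n}) : R :=
  \sum_(t : 'I_n | (t \notin B) && scarf (t |: B))
     sgn t (t |: B) * 'X_[mquot (lcmS (t |: B)) (lcmS B)] * c (t |: B).

(* F_Delta, augmented by F_0 -> R/I, e_emptyset |-> 1, is a minimal free
   resolution of R/I. *)
Definition scarf_minimal_free_resolution : Prop :=
  (forall i c, chain i.+1 c -> chain i (bd c)) /\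
  (* it is a complex: d o d = 0, and the augmentation kills d(F_1) *)
  (forall i c, chain i.+2 c -> forall B, bd (bd c) B = 0) /\
  (forall c, chain 1 c -> in_ideal (bd c set0)) /\
  (* exactness at R/I: augmentation F_0 -> R/I is surjective *)
  (forall r : R, exists c, chain 0 c /\ in_ideal (r - c set0)) /\
  (* exactness at F_0: ker(augmentation) = d(F_1) *)
  (forall c, chain 0 c -> in_ideal (c set0) ->
     exists d, chain 1 d /\ forall B, bd d B = c B) /\
  (forall i c, chain i.+1 c -> (forall B, bd c B = 0) ->
     exists d, chain i.+2 d /\ forall B, bd d B = c B) /\
  (* minimality: d(F) is contained in (x_1,...,x_m) F *)
  (forall i c, chain i c -> forall B, (bd c B)@_0%MM = 0).

End Scarf.

From HB Require Import structures.
From mathcomp Require Import all_boot all_order all_algebra.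
From mathcomp Require Import mpoly.
From mathcomp Require Import ring zify.
Set Implicit Arguments. Unset Strict Implicit. Unset Printing Implicit Defensive.
Import GRing.Theory.
Local Open Scope ring_scope.

(* Everything is checked one multidegree b at a time.  The b-strand of a chain
   (its coefficients of x^b) lives on the faces A with m_A | b, and on strands the
   differential of F_Delta is the simplicial boundary restricted to Scarf faces
   ([strand_bd]).  The full simplex on {i : s_i | b} is a cone, hence acyclic
   when nonempty.  Genericity pairs off its non-Scarf faces: the fiber of a
   non-Scarf alpha is an interval [I_alpha, I^alpha] with I_alpha <> I^alpha, so
   toggling a fixed v in I^alpha minus I_alpha is a perfect matching of the
   fiber.  Collapsing these pairs from the top lcm-degree down shows that every
   cycle on Scarf faces bounds a chain on Scarf faces.  Minimality holds because
   m_A <> m_(A minus t) for every Scarf face A. *)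

Lemma ex_sumr_neq0 (V : nmodType) (I : finType) (P : pred I) (F : I -> V) :
  \sum_(i | P i) F i != 0 -> exists2 i, P i & F i != 0.
Proof.
move=> nz; apply/exists_inP; apply: contraNT nz => /exists_inPn nF.
by apply/eqP/big1 => i /nF /negPn/eqP.
Qed.

Lemma mulr_neq0r (R : pzSemiRingType) (a b : R) : a * b != 0 -> b != 0.
Proof. by apply: contraNneq => ->; rewrite mulr0. Qed.

Lemma sumr_antisym (V : zmodType) n (g : 'I_n -> 'I_n -> V) :
  (forall t, g t t = 0) -> (forall t u, g t u = - g u t) ->
  \sum_t \sum_u g t u = 0.
Proof.
move=> g0 gN; pose h (t u : 'I_n) := if (t < u)%N then g t u else 0.
have split_g t u : g t u = h t u - h u t.
  rewrite /h; case: ltngtP => [||/val_inj->]; rewrite ?subr0 ?sub0r ?g0 //.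
under eq_bigr do rewrite (eq_bigr _ (fun u _ => split_g _ u)) sumrB.
by rewrite sumrB exchange_big subrr.
Qed.

Lemma setD1U1 (T : finType) (t v : T) (B : {set T}) :
  t != v -> (t |: B) :\ v = t |: (B :\ v).
Proof.
by move=> ntv; apply/setP=> u; rewrite !inE; case: (eqVneq u t) => [->|]; rewrite ?ntv.
Qed.

Lemma seq_choice (T : eqType) (U : Type) (u0 : U) (bs : seq T) (Q : T -> U -> Prop) :
  (forall b, b \in bs -> exists y, Q b y) -> exists Y, forall b, b \in bs -> Q b (Y b).
Proof.
elim: bs => [|b0 bs IH] exQ; first by exists (fun _ => u0).
have [y0 Qy0] := exQ b0 (mem_head _ _).
have [Y QY] : exists Y, forall b, b \in bs -> Q b (Y b).
  by apply: IH => b bbs; apply: exQ; rewrite inE bbs orbT.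
exists (fun b => if b == b0 then y0 else Y b) => b; rewrite inE.
by case: eqP => [->|_ /QY].
Qed.

Lemma lem_anti m (a b : 'X_{1..m}) : (a <= b)%MM -> (b <= a)%MM -> a = b.
Proof.
move=> /mnm_lepP le_ab /mnm_lepP le_ba; apply/mnmP=> j.
by apply/eqP; rewrite eqn_leq le_ab le_ba.
Qed.

Lemma lem_mdeg m (a b : 'X_{1..m}) : (a <= b)%MM -> (mdeg a <= mdeg b)%N.
Proof. by move=> /lem_leo /lemc_mdeg. Qed.

Lemma lem_mdeg_eq m (a b : 'X_{1..m}) : (a <= b)%MM -> (mdeg b <= mdeg a)%N -> a = b.
Proof.
move=> le_ab; rewrite -(submK le_ab) mdegD -{2}[mdeg a]add0n leq_add2r leqn0.
by rewrite mdeg_eq0 => /eqP->; rewrite add0m.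
Qed.

Lemma lem_mdeg_lt m (a b : 'X_{1..m}) : (a <= b)%MM -> a != b -> (mdeg a < mdeg b)%N.
Proof.
by move=> le_ab nab; rewrite ltnNge; apply: contra nab => /(lem_mdeg_eq le_ab)->.
Qed.

Lemma lem_subm0 m (a b : 'X_{1..m}) : (a - b <= 0)%MM = (a <= b)%MM.
Proof. by apply/mnm_lepP/mnm_lepP => le j; have := le j; rewrite mnmBE mnm0E; lia. Qed.

Lemma lem_sub2rE m (a b c : 'X_{1..m}) :
  (c <= a)%MM -> (c <= b)%MM -> (a - c <= b - c)%MM = (a <= b)%MM.
Proof.
move=> /mnm_lepP ca /mnm_lepP cb; apply/mnm_lepP/mnm_lepP => le j;
  have := le j; have := ca j; have := cb j; rewrite !mnmBE; lia.
Qed.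

Lemma subm2r m (a b c : 'X_{1..m}) :
  (c <= a)%MM -> (c <= b)%MM -> (b - c - (a - c) = b - a)%MM.
Proof.
move=> /mnm_lepP ca /mnm_lepP cb; apply/mnmP=> j.
by have := ca j; have := cb j; rewrite !mnmBE; lia.
Qed.

Lemma mquotE m (a b : 'X_{1..m}) : mquot a b = (a - b)%MM.
Proof. by []. Qed.

Lemma mcoeffXM (R : comNzRingType) m (q u : 'X_{1..m}) (p : {mpoly R[m]}) :
  ('X_[q] * p)@_u = if (q <= u)%MM then p@_(u - q) else 0.
Proof.
rewrite mulrC; case: ifP => [le_qu|nle_qu].
  by rewrite -{1}(submK le_qu) addmC mcoeffMX.
apply/eqP; rewrite mcoeff_eq0 (perm_mem (msuppMX p q)).
by apply: contraFN nle_qu => /mapP[u' _ ->]; apply: lem_addr.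
Qed.

Section LcmLattice.
Variables (m n : nat) (s : 'I_n -> 'X_{1..m}).
Local Notation lcm := (lcmS s).
Implicit Types (A B : {set 'I_n}) (b : 'X_{1..m}).

Lemma lcmSE A j : lcm A j = (\max_(i in A) s i j)%N.
Proof. by rewrite mnmE. Qed.

Lemma lcmS0 : lcm set0 = 0%MM.
Proof. by apply/mnmP=> j; rewrite lcmSE big_set0 mnm0E. Qed.

Lemma lcmS1 t : lcm [set t] = s t.
Proof. by apply/mnmP=> j; rewrite lcmSE big_set1. Qed.

Lemma lem_lcmS A b : (lcm A <= b)%MM = [forall i in A, s i <= b]%MM.
Proof.
apply/mnm_lepP/forall_inP => [le_lcm i iA|le_gen j].
  by apply/mnm_lepP=> j; apply: leq_trans (le_lcm j); rewrite lcmSE; exact: leq_bigmax_cond.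
by rewrite lcmSE; apply/bigmax_leqP => i /le_gen /mnm_lepP.
Qed.

Lemma lem_gen_lcmS i A : i \in A -> (s i <= lcm A)%MM.
Proof. by move=> iA; apply/mnm_lepP=> j; rewrite lcmSE; exact: leq_bigmax_cond. Qed.

Lemma lem_lcmSS A B : A \subset B -> (lcm A <= lcm B)%MM.
Proof.
by move=> /subsetP sAB; rewrite lem_lcmS; apply/forall_inP=> i /sAB/lem_gen_lcmS.
Qed.

Lemma lcmS_setU1 t A : lcm (t |: A) = mlcm (s t) (lcm A).
Proof.
apply: lem_anti.
  rewrite lem_lcmS; apply/forall_inP => i; rewrite in_setU1 => /predU1P[->|iA].
    exact: lem_mlcml.
  exact: lepm_trans (lem_gen_lcmS iA) (lem_mlcmr _ _).
by rewrite lem_mlcm lem_gen_lcmS ?setU11 // lem_lcmSS ?subsetUr.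
Qed.

End LcmLattice.

Section ScarfComplex.
Variables (m n : nat) (s : 'I_n -> 'X_{1..m}).
Local Notation lcm := (lcmS s).
Local Notation scarf := (scarf s).
Implicit Types (A B : {set 'I_n}).

Lemma scarfP A : reflect (forall B, B != A -> lcm B != lcm A) (scarf A).
Proof. by apply: (iffP forallP) => scA B; apply/implyP/scA. Qed.

Lemma scarf_lcmS_eq A B : scarf A -> lcm B = lcm A -> B = A.
Proof. by move=> /scarfP scA eBA; case: (eqVneq B A) => // /scA; rewrite eBA eqxx. Qed.

Lemma nonscarfP A : ~~ scarf A -> exists2 B, B != A & lcm B = lcm A.
Proof.
by move=> /forallPn[B]; rewrite negb_imply negbK => /andP[nBA /eqP]; exists B.
Qed.

Lemma scarf_face t B : scarf (t |: B) -> scarf B.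
Proof.
move=> sc; have [tB|tB] := boolP (t \in B).
  by move: sc; rewrite (setUidPr _) // sub1set.
apply/scarfP => B' nB'B; apply/eqP => eB'B.
have e : t |: B' = t |: B by apply: scarf_lcmS_eq sc _; rewrite !lcmS_setU1 eB'B.
have tB' : t \in B'.
  apply: contraNT nB'B => tB'; apply/eqP.
  by rewrite -(setU1K tB) -(setU1K tB') e.
have eB : B = t |: B.
  by apply: scarf_lcmS_eq sc _; rewrite -e (setUidPr _) ?sub1set // eB'B.
by move: tB; rewrite eB setU11.
Qed.

(* For a non-Scarf [alpha] the fiber of [lcmS] over [alpha] is an interval
   [I_alpha, I^alpha] with I_alpha <> I^alpha, and toggling any element of
   I^alpha :\: I_alpha stays in the fiber; [pivot] picks such an element
   canonically, as a function of [alpha] alone. *)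
Definition pivot_for (alpha : 'X_{1..m}) (v : 'I_n) : bool :=
  [forall A, (lcm A == alpha) ==> (lcm (v |: A) == alpha) && (lcm (A :\ v) == alpha)].

Definition pivot (alpha : 'X_{1..m}) : option 'I_n := [pick v | pivot_for alpha v].

Lemma pivotP A : generic_type s -> ~~ scarf A ->
  exists2 v, pivot (lcm A) = Some v &
    forall A', lcm A' = lcm A -> lcm (v |: A') = lcm A /\ lcm (A' :\ v) = lcm A.
Proof.
move=> gen nscA; have [B nBA eBA] := nonscarfP nscA.
have [A0 nA0 eA0] : exists2 A0, A0 != set0 & lcm A0 = lcm A.
  by case: (eqVneq A set0) => [A0|]; [exists B; rewrite // -A0 | exists A].
have [Il [Iu [_ fiber]]] := gen A0 nA0; rewrite eA0 in fiber.
have [AIl AIu] := iffLR (fiber A) erefl.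
have [BIl BIu] := iffLR (fiber B) eBA.
have [v vIu vIl] : exists2 v, v \in Iu & v \notin Il.
  apply/subsetPn; apply: contra_neqN nBA => sIuIl; apply/eqP.
  by rewrite eqEsubset (subset_trans BIu (subset_trans sIuIl AIl))
             (subset_trans AIu (subset_trans sIuIl BIl)).
have toggle A' : lcm A' = lcm A -> lcm (v |: A') = lcm A /\ lcm (A' :\ v) = lcm A.
  move=> /fiber[A'Il A'Iu]; split; apply/fiber; split.
  - exact: subset_trans A'Il (subsetUr _ _).
  - by rewrite subUset sub1set vIu.
  - by rewrite subsetD1 A'Il.
  - exact: subset_trans (subD1set _ _) A'Iu.
rewrite /pivot; case: pickP => [v' pv'|/(_ v)/negP[]].
  exists v' => // A' /eqP eA'; move/forallP/(_ A'): pv'; rewrite eA' /=.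
  by case/andP => /eqP-> /eqP->.
by apply/forallP=> A'; apply/implyP=> /eqP/toggle[-> ->]; rewrite !eqxx.
Qed.

End ScarfComplex.

Section TaylorComplex.
Variables (R : comPzRingType) (n : nat).
Implicit Types (A B : {set 'I_n}) (x y : {set 'I_n} -> R).

Definition tsign t A : R := (-1) ^+ #|[set u in A | (u < t)%N]|.

Lemma tsign_sqr t A : tsign t A * tsign t A = 1.
Proof. by rewrite -exprMn mulrNN mulr1 expr1n. Qed.

Lemma tsign_setD1 t v A : v \in A ->
  tsign t A = (-1) ^+ (v < t)%N * tsign t (A :\ v).
Proof.
move=> vA; rewrite /tsign -exprD (cardsD1 v) inE vA; congr (_ ^+ (_ + _)).
by apply: eq_card => u; rewrite !inE andbA.
Qed.

Lemma tsign_swap t v A : t != v -> t \in A -> v \in A ->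
  tsign t A * tsign v (A :\ t) = - (tsign v A * tsign t (A :\ v)).
Proof.
move=> ntv tA vA; rewrite (tsign_setD1 t vA) (tsign_setD1 v tA).
by case: ltngtP => [_|_|/val_inj eq_tv] /=; [ring | ring | rewrite eq_tv eqxx in ntv].
Qed.

Lemma tsign_mul_swap t v A : t != v -> t \in A -> v \in A ->
  tsign t A * tsign v A = - (tsign t (A :\ v) * tsign v (A :\ t)).
Proof.
move=> ntv tA vA; rewrite (tsign_setD1 t vA) (tsign_setD1 v tA).
by case: ltngtP => [_|_|/val_inj eq_tv] /=; [ring | ring | rewrite eq_tv eqxx in ntv].
Qed.

Definition taylor_bd x B : R :=
  \sum_(t | t \notin B) tsign t (t |: B) * x (t |: B).

Lemma eq_taylor_bd x y B : x =1 y -> taylor_bd x B = taylor_bd y B.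
Proof. by move=> exy; apply: eq_bigr => t _; rewrite exy. Qed.

Lemma taylor_bd0 B : taylor_bd (fun _ => 0) B = 0.
Proof. by rewrite /taylor_bd big1 // => t _; rewrite mulr0. Qed.

Lemma taylor_bdD x y B :
  taylor_bd (fun A => x A + y A) B = taylor_bd x B + taylor_bd y B.
Proof. by rewrite /taylor_bd -big_split; apply: eq_bigr => t _; rewrite mulrDr. Qed.

Lemma taylor_bdB x y B :
  taylor_bd (fun A => x A - y A) B = taylor_bd x B - taylor_bd y B.
Proof. by rewrite /taylor_bd -sumrB; apply: eq_bigr => t _; rewrite mulrBr. Qed.

Lemma taylor_bd_bd x B : taylor_bd (taylor_bd x) B = 0.
Proof.
pose g t u := if [&& t \notin B, u \notin B & u != t] then
  tsign t (t |: B) * tsign u (u |: (t |: B)) * x (u |: (t |: B)) else 0.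
have -> : taylor_bd (taylor_bd x) B = \sum_t \sum_u g t u.
  rewrite /taylor_bd [LHS]big_mkcond; apply: eq_bigr => t _; case: ifP => tB; last first.
    by rewrite big1 // => u _; rewrite /g tB.
  rewrite mulr_sumr big_mkcond; apply: eq_bigr => u _.
  by rewrite /g tB in_setU1 negb_or andbC; case: ifP; rewrite ?mulrA.
apply: sumr_antisym => [t|t u]; first by rewrite /g eqxx !andbF.
rewrite /g eq_sym; case: (boolP (t \notin B)) => tB /=; rewrite ?andbF ?oppr0 //.
case: (boolP (u \notin B)) => uB; case: eqP => [|/eqP ntu]; rewrite ?oppr0 //=.
rewrite setUCA; set A := t |: (u |: B).
have tA : t \in A by rewrite setU11.
have uA : u \in A by rewrite setU1r ?setU11.
have := tsign_swap ntu tA uA.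
rewrite setU1K ?in_setU1 ?negb_or ?ntu // /A setUCA.
rewrite setU1K ?in_setU1 ?negb_or 1?eq_sym ?ntu //.
by move=> swap; rewrite [tsign u (u |: B) * _]mulrC swap; ring.
Qed.

Lemma taylor_cycle_setD1 x v B : v \in B -> taylor_bd x (B :\ v) = 0 ->
  x B = \sum_(t | t \notin B) tsign t (t |: B) * (tsign v (t |: B) * x ((t |: B) :\ v)).
Proof.
move=> vB cyc.
have {}cyc : tsign v B * x B +
    \sum_(t | t \notin B) tsign t ((t |: B) :\ v) * x ((t |: B) :\ v) = 0.
  rewrite -[RHS]cyc /taylor_bd [RHS](bigD1 v) ?setD11 //= setD1K //; congr (_ + _).
  apply: eq_big => [t|t tB]; last by rewrite setD1U1 //; apply: contraNneq tB => ->.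
  rewrite in_setD1 negb_and negbK.
  by have [etv|_] := eqVneq t v; [subst t; rewrite vB | rewrite andbT].
move/eqP: cyc; rewrite addr_eq0 => /eqP cyc.
rewrite -[x B]mul1r -(tsign_sqr v B) -mulrA cyc mulrN mulr_sumr -sumrN.
apply: eq_bigr => t tB; have ntv : t != v by apply: contraNneq tB => ->.
have := tsign_mul_swap ntv (setU11 t B) (setU1r t vB); rewrite setU1K // => swap.
by rewrite [RHS]mulrA swap; ring.
Qed.

Definition cone v x A : R := if v \in A then tsign v A * x (A :\ v) else 0.

Lemma taylor_bd_cone v x B :
  (forall B, taylor_bd x B = 0) -> taylor_bd (cone v x) B = x B.
Proof.
move=> cyc; have [vB|vB] := boolP (v \in B).
  rewrite (taylor_cycle_setD1 vB (cyc _)); apply: eq_bigr => t _.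
  by rewrite /cone setU1r.
rewrite /taylor_bd (bigD1 v) //= big1 ?addr0 => [|t /andP[_ ntv]].
  by rewrite /cone setU11 setU1K // mulrA tsign_sqr mul1r.
by rewrite /cone in_setU1 eq_sym (negbTE ntv) (negbTE vB) mulr0.
Qed.

Definition degree_part p x A : R := if #|A| == p then x A else 0.

Lemma taylor_bd_degree_part p x B :
  taylor_bd (degree_part p.+1 x) B = degree_part p (taylor_bd x) B.
Proof.
rewrite /degree_part /taylor_bd; case: ifP => cardB.
  by apply: eq_bigr => t tB; rewrite cardsU1 tB add1n eqSS cardB.
by rewrite big1 // => t tB; rewrite cardsU1 tB add1n eqSS cardB mulr0.
Qed.

End TaylorComplex.

Section CollapseOntoScarf.
Variables (R : comPzRingType) (m n : nat) (s : 'I_n -> 'X_{1..m}).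
Hypothesis gen : generic_type s.
Local Notation lcm := (lcmS s).
Local Notation scarf := (scarf s).
Implicit Types (A B : {set 'I_n}) (x y : {set 'I_n} -> R) (b : 'X_{1..m}).

Definition supp_mdiv b x := forall A, x A != 0 -> (lcm A <= b)%MM.

Definition supp_scarf x := forall A, x A != 0 -> scarf A.

Lemma taylor_bd_supp_mdiv b x : supp_mdiv b x -> supp_mdiv b (taylor_bd x).
Proof.
move=> xb B /ex_sumr_neq0[t _ /mulr_neq0r/xb].
exact/lepm_trans/lem_lcmSS/subsetUr.
Qed.

Lemma cone_supp_mdiv b v x :
  (s v <= b)%MM -> supp_mdiv b x -> supp_mdiv b (cone v x).
Proof.
move=> vb xb A; rewrite /cone; case: ifP => [vA|_]; last by rewrite eqxx.
move=> /mulr_neq0r /xb; rewrite !lem_lcmS => /forall_inP lcmb.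
by apply/forall_inP => i iA; have [->//|niv] := eqVneq i v; rewrite lcmb // in_setD1 niv.
Qed.

(* The Morse matching of the non-Scarf faces of lcm-degree [D]: each is paired
   with its toggle along the pivot of its lcm. *)
Definition collapse_step D x A : R :=
  if ~~ scarf A && (mdeg (lcm A) == D) then
    if pivot s (lcm A) is Some v then cone v x A else 0
  else 0.

Lemma collapse_step_supp_mdiv b D x :
  supp_mdiv b x -> supp_mdiv b (collapse_step D x).
Proof.
move=> xb A; rewrite /collapse_step; case: ifP => [/andP[nscA _]|]; last by rewrite eqxx.
have [v -> toggle] := pivotP gen nscA; rewrite /cone; case: ifP => _; last by rewrite eqxx.
by move=> /mulr_neq0r /xb; have [_ ->] := toggle A erefl.
Qed.

Lemma collapse_step_setU1 D x t B : (D <= mdeg (lcm B))%N ->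
  collapse_step D x (t |: B) != 0 -> lcm (t |: B) = lcm B /\ mdeg (lcm B) = D.
Proof.
move=> DB; rewrite /collapse_step.
case: ifP => [/andP[_ /eqP degD] _|]; last by rewrite eqxx.
have e : lcm B = lcm (t |: B).
  by apply: lem_mdeg_eq; rewrite ?lem_lcmSS ?subsetUr ?degD.
by rewrite -e in degD.
Qed.

Lemma collapse_stepP D x B :
  (forall A, ~~ scarf A -> (D < mdeg (lcm A))%N -> x A = 0) ->
  (forall B, ~~ scarf B -> taylor_bd x B = 0) ->
  ~~ scarf B -> (D <= mdeg (lcm B))%N -> x B = taylor_bd (collapse_step D x) B.
Proof.
move=> x_high cyc nscB DB; rewrite /taylor_bd.
have [degB|degB] := eqVneq (mdeg (lcm B)) D; last first.
  rewrite x_high ?ltn_neqAle 1?eq_sym ?degB // big1 // => t _.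
  have [->|/(collapse_step_setU1 DB)[_ degD]] := eqVneq (collapse_step D x (t |: B)) 0.
    by rewrite mulr0.
  by rewrite degD eqxx in degB.
have [v pv toggle] := pivotP gen nscB.
have step_U1 t : collapse_step D x (t |: B) =
    if lcm (t |: B) == lcm B then cone v x (t |: B) else 0.
  case: eqP => e.
    have nsc : ~~ scarf (t |: B).
      by apply: contra nscB => sc; rewrite (scarf_lcmS_eq sc (esym e)).
    by rewrite /collapse_step nsc e degB eqxx pv.
  have [//|/(collapse_step_setU1 DB)[e' _]] := eqVneq (collapse_step D x (t |: B)) 0.
  by case: e.
under eq_bigr do rewrite step_U1.
have [vB|vB] := boolP (v \in B); last first.
  rewrite (bigD1 v) //= big1 ?addr0 => [|t /andP[_ ntv]].
    have [e _] := toggle B erefl.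
    by rewrite e eqxx /cone setU11 setU1K // mulrA tsign_sqr mul1r.
  by case: eqP; rewrite ?mulr0 // /cone in_setU1 eq_sym (negbTE ntv) (negbTE vB) mulr0.
have [_ lcmBv] := toggle B erefl.
have nscBv : ~~ scarf (B :\ v).
  by apply: contra nscB => sc; rewrite (scarf_lcmS_eq sc (esym lcmBv)).
rewrite (taylor_cycle_setD1 vB (cyc _ nscBv)); apply: eq_bigr => t tB.
case: eqP => e; first by rewrite /cone setU1r.
have ntv : t != v by apply: contraNneq tB => ->.
suff -> : x ((t |: B) :\ v) = 0 by rewrite !mulr0.
apply: x_high.
  by apply: contra nscBv; rewrite setD1U1 //; apply: scarf_face.
rewrite -degB lem_mdeg_lt // -?lcmBv ?lem_lcmSS ?setSD ?subsetUr //.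
apply/negP => /eqP/esym; rewrite lcmBv => /toggle[lcm_tB _]; apply: e.
by rewrite -lcm_tB setD1K ?setU1r.
Qed.

Lemma collapse_onto_scarf b x : supp_mdiv b x ->
  (forall B, ~~ scarf B -> taylor_bd x B = 0) ->
  exists2 y, supp_mdiv b y & forall A, ~~ scarf A -> x A + taylor_bd y A = 0.
Proof.
move=> xb cyc.
(* Induct on a strict upper bound for the lcm-degrees of the non-Scarf faces in
   the support of x, removing the top degree with [collapse_stepP]. *)
have x_high A : ~~ scarf A -> ((mdeg b).+1 <= mdeg (lcm A))%N -> x A = 0.
  move=> _ degA; apply/eqP; apply: contraTT degA => /xb/lem_mdeg.
  by rewrite -ltnNge ltnS.
elim: (mdeg b).+1 x xb cyc x_high => [|D IH] x xb cyc x_high.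
  by exists (fun _ => 0) => [A|A nscA]; rewrite ?eqxx // taylor_bd0 addr0 x_high.
pose w := collapse_step D x; pose x' A := x A - taylor_bd w A.
have wb : supp_mdiv b w by exact: collapse_step_supp_mdiv.
have x'b : supp_mdiv b x'.
  move=> A; rewrite /x'; have [->|/xb//] := eqVneq (x A) 0.
  by rewrite sub0r oppr_eq0; apply: taylor_bd_supp_mdiv.
have [y yb x'y] : exists2 y, supp_mdiv b y &
    forall A, ~~ scarf A -> x' A + taylor_bd y A = 0.
  apply: IH => // [B nscB|A nscA degA].
    by rewrite taylor_bdB taylor_bd_bd subr0 cyc.
  by rewrite /x' -collapse_stepP // subrr.
exists (fun A => y A - w A) => [A|A nscA].
  by have [->|/yb//] := eqVneq (y A) 0; rewrite sub0r oppr_eq0 => /wb.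
by rewrite taylor_bdB -(x'y A nscA) /x'; ring.
Qed.

Lemma scarf_cycle_boundary b p x v : (s v <= b)%MM ->
  supp_mdiv b x -> supp_scarf x -> (forall A, x A != 0 -> #|A| = p) ->
  (forall B, taylor_bd x B = 0) ->
  exists y, [/\ supp_mdiv b y, supp_scarf y, (forall A, y A != 0 -> #|A| = p.+1)
              & forall B, taylor_bd y B = x B].
Proof.
move=> vb xb xsc xp cyc; pose w := cone v x.
have wb : supp_mdiv b w by exact: cone_supp_mdiv.
have bd_w B : taylor_bd w B = x B by exact: taylor_bd_cone.
have w_cyc B : ~~ scarf B -> taylor_bd w B = 0.
  by move=> nscB; rewrite bd_w; apply/eqP; apply: contraNT nscB => /xsc.
have [y yb wy] := collapse_onto_scarf wb w_cyc.
pose z A := w A + taylor_bd y A.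
exists (degree_part p.+1 z); split => [A|A|A|B]; rewrite /degree_part /z.
- case: ifP => _; last by rewrite eqxx.
  by have [->|/wb//] := eqVneq (w A) 0; rewrite add0r => /(taylor_bd_supp_mdiv yb).
- case: ifP => _; last by rewrite eqxx.
  by apply: contraNT => /wy ->; rewrite eqxx.
- by case: ifP => [/eqP//|]; rewrite eqxx.
rewrite taylor_bd_degree_part /degree_part taylor_bdD bd_w taylor_bd_bd addr0.
by case: ifP => // /negbT cardB; apply/esym; apply: contraNeq cardB => /xp ->.
Qed.

End CollapseOntoScarf.

Section Strands.
Variables (k : fieldType) (m n : nat) (s : 'I_n -> 'X_{1..m}).
Local Notation R := {mpoly k[m]}.
Local Notation lcm := (lcmS s).
Implicit Types (A B : {set 'I_n}) (b : 'X_{1..m}) (c d : {set 'I_n} -> R).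

(* The coefficient of x^b in (c A) e_A, recalling that e_A has multidegree m_A. *)
Definition strand b c A : k := if (lcm A <= b)%MM then (c A)@_(b - lcm A) else 0.

Lemma strand_supp_mdiv b c : supp_mdiv s b (strand b c).
Proof. by move=> A; rewrite /strand; case: ifP => //; rewrite eqxx. Qed.

Lemma strand_neq0 b c A : strand b c A != 0 -> c A != 0.
Proof.
rewrite /strand; case: ifP => _; last by rewrite eqxx.
by apply: contraNneq => ->; rewrite mcoeff0.
Qed.

Lemma strand_inj c d B : (forall b, strand b c B = strand b d B) -> c B = d B.
Proof.
move=> cd; apply/mpolyP => u; have := cd (u + lcm B)%MM.
by rewrite /strand lem_addl addmK.
Qed.

Lemma sgnE t A : sgn k m t A = (tsign k t A)%:MP.
Proof. by rewrite /sgn /tsign rmorphXn rmorphN1. Qed.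

Lemma strand_bd b c B :
  supp_scarf s c -> strand b (bd s c) B = taylor_bd (strand b c) B.
Proof.
move=> csc; rewrite /strand /taylor_bd; case: ifP => Bb; last first.
  rewrite big1 // => t _; case: ifP => [tBb|_]; last by rewrite mulr0.
  by move: Bb; rewrite (lepm_trans (lem_lcmSS s (subsetUr [set t] B)) tBb).
rewrite /bd raddf_sum /= big_mkcond [RHS]big_mkcond /=; apply: eq_bigr => t _.
case: (boolP (t \notin B)) => tB //=.
have BtB := lem_lcmSS s (subsetUr [set t] B).
case: (boolP (scarf s (t |: B))) => sc; last first.
  have -> : c (t |: B) = 0 by apply/eqP; apply: contraNT sc => /csc.
  by rewrite mcoeff0 if_same mulr0.
by rewrite sgnE -mulrA mcoeffCM mcoeffXM mquotE lem_sub2rE // subm2r.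
Qed.

Definition of_strands (bs : seq 'X_{1..m}) (y : 'X_{1..m} -> {set 'I_n} -> k) A : R :=
  \sum_(b <- bs) y b A *: 'X_[b - lcm A].

Lemma strand_of_strands bs y b' A : uniq bs ->
  (forall b, b \in bs -> supp_mdiv s b (y b)) ->
  strand b' (of_strands bs y) A = if b' \in bs then y b' A else 0.
Proof.
move=> bs_uniq yb; rewrite /strand /of_strands; case: ifP => Ab'; last first.
  by case: ifP => // b'bs; apply/esym/eqP; apply: contraFT Ab'; apply: yb.
rewrite raddf_sum /= (eq_big_seq (fun b => if b == b' then y b' A else 0)) => [|b bbs].
  rewrite -big_mkcond /=; case: ifP => [b'bs|b'nbs].
    by rewrite -big_filter filter_pred1_uniq // big_seq1.
  by rewrite big1_seq // => b /andP[/eqP-> ]; rewrite b'nbs.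
rewrite mcoeffZ mcoeffX; have [->|nbb'] := eqVneq b b'; first by rewrite eqxx mulr1.
have [->|/(yb b bbs) Ab] := eqVneq (y b A) 0; first by rewrite mul0r.
by rewrite -(eqm_add2r (lcm A)) !submK // (negbTE nbb') mulr0.
Qed.

Definition strand_degrees c : seq 'X_{1..m} :=
  undup [seq (u + lcm A)%MM | A <- enum [set: {set 'I_n}], u <- msupp (c A)].

Lemma strand_degreesP b c A : strand b c A != 0 -> b \in strand_degrees c.
Proof.
rewrite /strand; case: ifP => [Ab|_]; last by rewrite eqxx.
rewrite -mcoeff_msupp => u_supp; rewrite mem_undup -(submK Ab).
by apply: (allpairs_f_dep (fun A u => (u + lcm A)%MM)); rewrite // mem_enum inE.
Qed.

Lemma boundary_of_cycle p c : generic_type s -> chain s p c ->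
  (forall B, bd s c B = 0) ->
  (forall b A, strand b c A != 0 -> exists v, (s v <= b)%MM) ->
  exists d, chain s p.+1 d /\ forall B, bd s d B = c B.
Proof.
move=> gen cp cyc gen_b; have csc : supp_scarf s c by move=> A /cp[].
pose bs := strand_degrees c.
pose bounds b y := [/\ supp_mdiv s b y, supp_scarf s y,
  forall A, y A != 0 -> #|A| = p.+1 & forall B, taylor_bd y B = strand b c B].
have [Y Yb] : exists Y, forall b, b \in bs -> bounds b (Y b).
  apply: (seq_choice (fun _ => 0)) => b _.
  have strand_cyc B : taylor_bd (strand b c) B = 0.
    by rewrite -strand_bd // /strand cyc mcoeff0 if_same.
  have [/existsP[? /gen_b[v vb]]|/existsPn strand0] := boolP [exists A, strand b c A != 0].
    apply: (scarf_cycle_boundary (p := p) gen vb (@strand_supp_mdiv b c) _ _ strand_cyc).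
      by move=> A /strand_neq0/csc.
    by move=> A /strand_neq0/cp[].
  exists (fun _ => 0); split=> [A|A|A|B]; rewrite ?eqxx //.
  by rewrite taylor_bd0; apply/esym/eqP; rewrite -[_ == 0]negbK strand0.
pose d := of_strands bs Y.
have dY b A : strand b d A = if b \in bs then Y b A else 0.
  by apply: strand_of_strands; [apply: undup_uniq | move=> b' /Yb[]].
have dp : chain s p.+1 d.
  move=> A dA; have [b bbs YbA] : exists2 b, b \in bs & Y b A != 0.
    apply/hasP; apply: contraNT dA => /hasPn Y0.
    by rewrite /d /of_strands big_seq big1 // => b /Y0/negbNE/eqP->; rewrite scale0r.
  by have [_ Ysc Yp _] := Yb b bbs; split; [apply: Ysc | apply: Yp].
exists d; split=> // B; apply: strand_inj => b.
rewrite strand_bd; last by move=> A /dp[].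
have [bbs|bnbs] := boolP (b \in bs).
  by have [_ _ _ <-] := Yb b bbs; apply: eq_taylor_bd => A; rewrite dY bbs.
rewrite (@eq_taylor_bd _ _ _ (fun _ => 0)) => [|A]; last by rewrite dY (negbTE bnbs).
by rewrite taylor_bd0; apply/esym/eqP; apply: contraNT bnbs => /strand_degreesP.
Qed.

End Strands.

Section ScarfResolution.
Variables (k : fieldType) (m n : nat) (s : 'I_n -> 'X_{1..m}).
Local Notation R := {mpoly k[m]}.
Implicit Types (A B : {set 'I_n}) (b : 'X_{1..m}) (c d : {set 'I_n} -> R).

Lemma chain_supp_scarf p c : chain s p c -> supp_scarf s c.
Proof. by move=> cp A /cp[]. Qed.

Lemma chain_bd p c : chain s p.+1 c -> chain s p (bd s c).
Proof.
move=> cp B /ex_sumr_neq0[t /andP[tB sc] /mulr_neq0r/cp[_]].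
by rewrite cardsU1 tB add1n => -[]; split=> //; apply: scarf_face sc.
Qed.

Lemma supp_scarf_bd c : supp_scarf s (bd s c).
Proof. by move=> B /ex_sumr_neq0[t /andP[_ /scarf_face]]. Qed.

Lemma bd_bd c B : supp_scarf s c -> bd s (bd s c) B = 0.
Proof.
move=> csc; apply: (@strand_inj _ _ _ s _ (fun _ => 0)) => b.
rewrite strand_bd; last exact: supp_scarf_bd.
rewrite (eq_taylor_bd B (fun A => strand_bd b A csc)).
by rewrite taylor_bd_bd /strand mcoeff0 if_same.
Qed.

Lemma bd_set0_in_ideal c : in_ideal s (bd s c set0).
Proof.
exists (fun t => if scarf s [set t] then sgn k m t [set t] * c [set t] else 0).
rewrite /bd big_mkcond; apply: eq_bigr => t _; rewrite in_set0 /= setU0 lcmS1 lcmS0.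
by rewrite mquotE subm0; case: ifP => _; rewrite ?mul0r // mulrAC.
Qed.

Lemma mcoeff_in_ideal (P : R) (u : 'X_{1..m}) :
  in_ideal s P -> P@_u != 0 -> exists i, (s i <= u)%MM.
Proof.
move=> [q ->]; rewrite raddf_sum /= => /ex_sumr_neq0[i _].
by rewrite mulrC mcoeffXM; case: ifP => [le_iu _|_]; [exists i | rewrite eqxx].
Qed.

Lemma in_ideal_gen0 t (r : R) : s t = 0%MM -> in_ideal s r.
Proof.
move=> st0; exists (fun i => if i == t then r else 0).
rewrite (bigD1 t) //= eqxx st0 mpolyX0 mulr1 big1 ?addr0 // => i /negbTE->.
by rewrite mul0r.
Qed.

Lemma augmentation_onto (r : R) : exists c, chain s 0 c /\ in_ideal s (r - c set0).
Proof.
have [sc0|nsc0] := boolP (scarf s set0).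
  exists (fun A => if A == set0 then r else 0); split; last first.
    by rewrite eqxx subrr; exists (fun _ => 0); rewrite big1 // => i _; rewrite mul0r.
  by move=> A /=; case: (A =P set0) => [-> _|_ /eqP//]; rewrite cards0.
have [B nB lcmB] := nonscarfP nsc0; have [t tB] := set0Pn _ nB.
have st0 : s t = 0%MM.
  apply/eqP; rewrite -mdeg_eq0 -leqn0 -(@mdeg0 m) lem_mdeg //.
  by rewrite -(lcmS0 s) -lcmB lem_gen_lcmS.
by exists (fun _ => 0); split=> [A|]; [rewrite eqxx | apply: in_ideal_gen0 st0].
Qed.

Lemma exact_at0 c : generic_type s -> chain s 0 c -> in_ideal s (c set0) ->
  exists d, chain s 1 d /\ forall B, bd s d B = c B.
Proof.
move=> gen c0 cI; apply: (boundary_of_cycle gen c0) => [B|b A].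
  rewrite /bd big1 // => t /andP[tB _].
  have [->|/c0[_]] := eqVneq (c (t |: B)) 0; first by rewrite mulr0.
  by rewrite cardsU1 tB.
move=> cbA; have /c0[_ /eqP] := strand_neq0 cbA; rewrite cards_eq0 => /eqP A0.
move: cbA; rewrite /strand A0 lcmS0 subm0; case: ifP => _; last by rewrite eqxx.
exact: mcoeff_in_ideal.
Qed.

Lemma exact_at_succ p c : generic_type s -> chain s p.+1 c ->
  (forall B, bd s c B = 0) -> exists d, chain s p.+2 d /\ forall B, bd s d B = c B.
Proof.
move=> gen cp cyc; apply: (boundary_of_cycle gen cp cyc) => b A cbA.
have /cp[_ cardA] := strand_neq0 cbA.
have [t tA] : exists t, t \in A by apply/set0Pn; rewrite -card_gt0 cardA.
exists t; apply: lepm_trans (lem_gen_lcmS s tA) _.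
by move: cbA; rewrite /strand; case: ifP => //; rewrite eqxx.
Qed.

Lemma bd_minimal c B : supp_scarf s c -> (bd s c B)@_0 = 0.
Proof.
move=> csc; rewrite /bd raddf_sum /= big1 // => t /andP[tB sc].
rewrite sgnE -mulrA mcoeffCM mcoeffXM; case: ifP => [|_]; last by rewrite mulr0.
rewrite mquotE lem_subm0 => tBB; have nBtB : B != t |: B.
  by apply: contraNneq tB => {1}->; rewrite setU11.
move/scarfP: sc => /(_ _ nBtB).
by rewrite (lem_anti (lem_lcmSS s (subsetUr _ B)) tBB) eqxx.
Qed.

End ScarfResolution.

Theorem corollary2p6 (k : fieldType) (m n : nat) (s : 'I_n -> 'X_{1..m}) :
  minimal_gens s -> generic_type s -> scarf_minimal_free_resolution k s.
Proof.
move=> _ gen; split; last split; last split; last split; last split; last split.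
- by move=> i c; apply: chain_bd.
- by move=> i c /chain_supp_scarf/bd_bd.
- by move=> c _; apply: bd_set0_in_ideal.
- exact: augmentation_onto.
- by move=> c; apply: exact_at0.
- by move=> i c; apply: exact_at_succ.
- by move=> i c /chain_supp_scarf/bd_minimal.
Qed.
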